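(* Let $z\in\mathcal F_\mathbb Z\setminus\{\Theta\}$, let $(q,r)$ be the lexicographically maximal FPF-visible inversion of $z$, and let $y=(q,r)z(q,r)$. Then $\hat\Psi^+(y,q)=\{z\}$.
   Context: Let $S_\mathbb Z$ be the group of finitely supported permutations of $\mathbb Z$. Let $\Theta(i)=i-(-1)^i$ and $\mathcal F_\mathbb Z=\{w^{-1}\Theta w:w\in S_\mathbb Z\}$. An FPF-visible inversion of $z$ is a pair $(i,j)\in\mathbb Z\times\mathbb Z$ with $i<j$ and $z(j)<\min\{i,z(i)\}$; every $z\ne\Theta$ has at least one, and there are finitely many. Let $\hat\ell_{\mathrm{FPF}}(z)=\frac12\#\{(i,j):i<j,\ z(i)>z(j),\ z(i)\ne j\}$. Define $\hat\Psi^+(y,q)=\{v\in\mathcal F_\mathbb Z:\hat\ell_{\mathrm{FPF}}(v)=\hat\ell_{\mathrm{FPF}}(y)+1,\ v=(q,j)y(q,j)\text{ for some integer }j>q\}$. *)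

From Stdlib Require Import ZArith List Lia.
Import ListNotations.
Open Scope Z_scope.

(* Theta(i) = i - (-1)^i : i-1 for even i, i+1 for odd i. *)
Definition Theta (i : Z) : Z := if Z.even i then i - 1 else i + 1.

Definition fin_perm (w winv : Z -> Z) : Prop :=
  (forall i, winv (w i) = i) /\ (forall i, w (winv i) = i) /\
  (exists N : Z, forall i, N < Z.abs i -> w i = i).

Definition in_FZ (z : Z -> Z) : Prop :=
  exists w winv, fin_perm w winv /\ forall i, z i = winv (Theta (w i)).

Definition transp (a b : Z) (i : Z) : Z :=
  if Z.eqb i a then b else if Z.eqb i b then a else i.

Definition conj_transp (a b : Z) (f : Z -> Z) : Z -> Z :=
  fun i => transp a b (f (transp a b i)).

(* pairs counted (twice) in \hat\ell_FPF *)
Definition lfpf_pair (z : Z -> Z) (p : Z * Z) : Prop :=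
  fst p < snd p /\ z (fst p) > z (snd p) /\ z (fst p) <> snd p.

(* twice_lfpf z k : the set {(i,j) : i<j, z i > z j, z i <> j} is finite with
   exactly k elements, i.e. 2 * \hat\ell_FPF(z) = k. *)
Definition twice_lfpf (z : Z -> Z) (k : nat) : Prop :=
  exists l : list (Z * Z), NoDup l /\ (forall p, In p l <-> lfpf_pair z p)
    /\ length l = k.

Definition fpf_visible (z : Z -> Z) (i j : Z) : Prop :=
  i < j /\ z j < Z.min i (z i).

Definition lex_le (p p' : Z * Z) : Prop :=
  fst p < fst p' \/ (fst p = fst p' /\ snd p <= snd p').

Definition lex_max_visible (z : Z -> Z) (q r : Z) : Prop :=
  fpf_visible z q r /\ forall i j, fpf_visible z i j -> lex_le (i, j) (q, r).

Definition in_PsiHatPlus (y : Z -> Z) (q : Z) (v : Z -> Z) : Prop :=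
  in_FZ v /\
  (exists k : nat, twice_lfpf y k /\ twice_lfpf v (k + 2)%nat) /\
  (exists j, q < j /\ v = conj_transp q j y).

From Stdlib Require Import ZArith List Lia Bool FunctionalExtensionality.
Import ListNotations.
Open Scope Z_scope.

(* An FPF involution f that agrees with Theta off a finite set has all its
   \hat\ell_FPF-pairs inside a finite window, so twice its length is a double
   sum over that window.  Conjugating by (a, b) with f a < a < b changes this
   sum by 2 sgn(f b - f a) + 2 [a < f b < b] + \sum_x psi x, where psi x
   collects the changes of the pairs joining x to {a, b, f a, f b}.  For
   y = (q, r) z (q, r), maximality of (q, r) kills every psi term when
   (a, b) = (q, r), so the increment is exactly 2; for any other j > q a case
   analysis on y j shows that the increment is at most 0 or at least 4, or
   exhibits a visible inversion of z lexicographically beyond (q, r). *)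

Fixpoint zsum (l : list Z) (F : Z -> Z) : Z :=
  match l with [] => 0 | x :: l' => F x + zsum l' F end.

Lemma zsum_ext l F G : (forall x, In x l -> F x = G x) -> zsum l F = zsum l G.
Proof. induction l; simpl; intros H; auto. rewrite H, IHl; auto. Qed.

Lemma zsum_add l F G : zsum l (fun x => F x + G x) = zsum l F + zsum l G.
Proof. induction l; simpl; lia. Qed.

Lemma zsum_sub l F G : zsum l (fun x => F x - G x) = zsum l F - zsum l G.
Proof. induction l; simpl; lia. Qed.

Lemma zsum_ge0 l F : (forall x, In x l -> 0 <= F x) -> 0 <= zsum l F.
Proof.
  induction l as [|a l IH]; simpl; intros H; [lia|].
  specialize (IH (fun x Hx => H x (or_intror Hx))). specialize (H a (or_introl eq_refl)). lia.
Qed.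

Lemma zsum_le0 l F : (forall x, In x l -> F x <= 0) -> zsum l F <= 0.
Proof.
  induction l as [|a l IH]; simpl; intros H; [lia|].
  specialize (IH (fun x Hx => H x (or_intror Hx))). specialize (H a (or_introl eq_refl)). lia.
Qed.

Lemma zsum_eq0 l F : (forall x, In x l -> F x = 0) -> zsum l F = 0.
Proof.
  induction l as [|a l IH]; simpl; intros H; [lia|].
  rewrite H, IH; auto.
Qed.

Lemma zsum_ge_term l F x : (forall y, In y l -> 0 <= F y) -> In x l -> F x <= zsum l F.
Proof.
  induction l as [|a l IH]; simpl; intros H Hx; [tauto|]. destruct Hx as [->|Hx].
  - pose proof (zsum_ge0 l F (fun y Hy => H y (or_intror Hy))). lia.
  - specialize (IH (fun y Hy => H y (or_intror Hy)) Hx). specialize (H a (or_introl eq_refl)). lia.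
Qed.

Lemma zsum_exchange l1 l2 (F : Z -> Z -> Z) :
  zsum l1 (fun i => zsum l2 (F i)) = zsum l2 (fun j => zsum l1 (fun i => F i j)).
Proof.
  induction l1; simpl.
  - induction l2; simpl; lia.
  - rewrite IHl1, <- zsum_add. reflexivity.
Qed.

Lemma remove_NoDup {A : Type} (eq_dec : forall x y : A, {x = y} + {x <> y}) x l :
  NoDup l -> NoDup (remove eq_dec x l).
Proof.
  induction 1 as [|a l Ha Hl IH]; simpl; [constructor|].
  destruct (eq_dec x a); auto. constructor; auto.
  intros Hin. apply in_remove in Hin. tauto.
Qed.

Lemma zsum_remove l F x : NoDup l -> In x l -> zsum l F = F x + zsum (remove Z.eq_dec x l) F.
Proof.
  induction 1 as [|a l Ha Hl IH]; simpl; [tauto|]. intros Hx.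
  destruct (Z.eq_dec x a) as [->|Hxa].
  - rewrite notin_remove; auto.
  - simpl. destruct Hx as [->|Hx]; [congruence|]. rewrite (IH Hx). lia.
Qed.

Definition remove4 (a b c d : Z) (l : list Z) : list Z :=
  remove Z.eq_dec d (remove Z.eq_dec c (remove Z.eq_dec b (remove Z.eq_dec a l))).

Lemma in_remove4 a b c d l x :
  In x (remove4 a b c d l) <-> In x l /\ x <> a /\ x <> b /\ x <> c /\ x <> d.
Proof.
  unfold remove4. split.
  - intros H. repeat (apply in_remove in H as [H ?]). tauto.
  - intros (H & ? & ? & ? & ?). repeat apply in_in_remove; auto.
Qed.

Lemma zsum_remove4 l F a b c d : NoDup l -> In a l -> In b l -> In c l -> In d l ->
  a <> b -> a <> c -> a <> d -> b <> c -> b <> d -> c <> d ->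
  zsum l F = F a + F b + F c + F d + zsum (remove4 a b c d l) F.
Proof.
  intros Hl Ha Hb Hc Hd **. unfold remove4.
  rewrite (zsum_remove l F a), (zsum_remove _ F b), (zsum_remove _ F c), (zsum_remove _ F d);
    repeat apply remove_NoDup; repeat apply in_in_remove; auto; lia.
Qed.

Definition window (K : Z) : list Z :=
  map (fun n => Z.of_nat n - 2 * K - 1) (seq 0 (Z.to_nat (4 * K + 2))).

Lemma in_window K x : 0 <= K -> In x (window K) <-> -2 * K - 1 <= x <= 2 * K.
Proof.
  intros HK. unfold window. rewrite in_map_iff. split.
  - intros [n [<- Hn]]. apply in_seq in Hn. lia.
  - intros Hx. exists (Z.to_nat (x + 2 * K + 1)). rewrite in_seq. lia.
Qed.

Lemma window_NoDup K : NoDup (window K).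
Proof.
  apply NoDup_map_NoDup_ForallPairs; [|apply seq_NoDup].
  intros m n _ _ E. lia.
Qed.

Lemma Theta_cases i :
  (exists k, i = 2 * k /\ Theta i = i - 1) \/ (exists k, i = 2 * k + 1 /\ Theta i = i + 1).
Proof.
  destruct (Z.Even_or_Odd i) as [[k ->]|[k ->]]; unfold Theta.
  - left. exists k. rewrite Z.even_even. auto.
  - right. exists k. rewrite Z.add_comm, Z.even_add_mul_2. auto.
Qed.

Lemma Theta_involutive i : Theta (Theta i) = i.
Proof.
  destruct (Theta_cases i) as [[k [Hk ->]]|[k [Hk ->]]];
    [destruct (Theta_cases (i - 1)) as [[k' [Hk' ->]]|[k' [Hk' ->]]]
    |destruct (Theta_cases (i + 1)) as [[k' [Hk' ->]]|[k' [Hk' ->]]]]; lia.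
Qed.

Lemma Theta_neq i : Theta i <> i.
Proof. destruct (Theta_cases i) as [[k [Hk E]]|[k [Hk E]]]; lia. Qed.

Lemma Theta_inversion i j : i < j -> Theta j < Theta i -> Theta i = j.
Proof.
  destruct (Theta_cases i) as [[k [Hk ->]]|[k [Hk ->]]];
    destruct (Theta_cases j) as [[k' [Hk' ->]]|[k' [Hk' ->]]]; lia.
Qed.

Lemma transp_l a b : transp a b a = b.
Proof. unfold transp. now rewrite Z.eqb_refl. Qed.

Lemma transp_r a b : transp a b b = a.
Proof. unfold transp. rewrite Z.eqb_refl. now destruct (Z.eqb_spec b a) as [->|]. Qed.

Lemma transp_other a b x : x <> a -> x <> b -> transp a b x = x.
Proof.
  unfold transp. intros. now destruct (Z.eqb_spec x a), (Z.eqb_spec x b).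
Qed.

Lemma transp_involutive a b x : transp a b (transp a b x) = x.
Proof.
  destruct (Z.eq_dec x a) as [->|]; [now rewrite transp_l, transp_r|].
  destruct (Z.eq_dec x b) as [->|]; [now rewrite transp_r, transp_l|].
  rewrite (transp_other a b x) by assumption. now apply transp_other.
Qed.

Lemma zsum_transp l F a b : NoDup l -> In a l -> In b l -> a <> b ->
  zsum l (fun x => F (transp a b x)) = zsum l F.
Proof.
  intros Hl Ha Hb Hab.
  assert (Hb' : In b (remove Z.eq_dec a l)) by (apply in_in_remove; auto).
  rewrite (zsum_remove l _ a), (zsum_remove l F a), (zsum_remove _ _ b (remove_NoDup _ a l Hl) Hb'),
    (zsum_remove _ F b (remove_NoDup _ a l Hl) Hb'), transp_l, transp_r by assumption.
  rewrite (zsum_ext _ (fun x => F (transp a b x)) F); [lia|].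
  intros x Hx. apply in_remove in Hx as [Hx Hxb]. apply in_remove in Hx as [_ Hxa].
  now rewrite transp_other.
Qed.

Lemma conj_transp_involutive a b f : conj_transp a b (conj_transp a b f) = f.
Proof.
  apply functional_extensionality. intros x. unfold conj_transp.
  now rewrite !transp_involutive.
Qed.

Lemma conj_transp_other f a b x : (forall i, f (f i) = i) ->
  x <> a -> x <> b -> x <> f a -> x <> f b -> conj_transp a b f x = f x.
Proof.
  intros f_inv Ha Hb Hfa Hfb. unfold conj_transp.
  rewrite (transp_other a b x) by assumption.
  apply transp_other; intros E; [apply Hfa|apply Hfb]; rewrite <- E; auto.
Qed.

Definition fpf_involution (f : Z -> Z) (M : Z) : Prop :=
  (forall i, f (f i) = i) /\ (forall i, f i <> i) /\ (forall i, M < Z.abs i -> f i = Theta i).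

Lemma in_FZ_fpf_involution z : in_FZ z -> exists M, fpf_involution z M.
Proof.
  intros [w [winv [[w_l [w_r [N HN]]] Hz]]].
  exists (Z.abs N + 1). split; [|split].
  - intros i. now rewrite !Hz, w_r, Theta_involutive, w_l.
  - intros i Hi. rewrite Hz in Hi. apply (f_equal w) in Hi. rewrite w_r in Hi.
    exact (Theta_neq _ Hi).
  - intros i Hi. rewrite Hz, (HN i) by lia.
    assert (N < Z.abs (Theta i)) by (destruct (Theta_cases i) as [[k [? ->]]|[k [? ->]]]; lia).
    rewrite <- (HN (Theta i)) at 1 by lia. apply w_l.
Qed.

Lemma fpf_involution_mono f M N : fpf_involution f M -> M <= N -> fpf_involution f N.
Proof. intros (H1 & H2 & H3) HMN. repeat split; auto. intros i Hi. apply H3. lia. Qed.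

Lemma fpf_involution_conj_transp f M a b : fpf_involution f M ->
  Z.abs a < M -> Z.abs b < M -> fpf_involution (conj_transp a b f) M.
Proof.
  intros (f_inv & f_fpf & f_Theta) Ha Hb. unfold conj_transp. split; [|split].
  - intros i. now rewrite transp_involutive, f_inv, transp_involutive.
  - intros i E. apply (f_equal (transp a b)) in E. rewrite transp_involutive in E.
    exact (f_fpf _ E).
  - intros i Hi. rewrite (transp_other a b i), f_Theta by lia.
    apply transp_other; destruct (Theta_cases i) as [[k [? ->]]|[k [? ->]]]; lia.
Qed.

Section Window.

Variables (f : Z -> Z) (K : Z).
Hypotheses (f_K : fpf_involution f K) (K_ge0 : 0 <= K).

(* The window [-2K-1, 2K] is a union of orbits of Theta, hence of f. *)
Lemma fpf_involution_window_cases x :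
  (-2 * K - 1 <= x <= 2 * K /\ -2 * K - 1 <= f x <= 2 * K) \/
  (x < -2 * K - 1 /\ f x = Theta x /\ f x < -2 * K - 1) \/
  (2 * K < x /\ f x = Theta x /\ 2 * K < f x).
Proof.
  destruct f_K as (f_inv & _ & f_Theta).
  assert (Hout : forall y, ~ (-2 * K - 1 <= y <= 2 * K) -> f y = Theta y /\
            (y < -2 * K - 1 -> f y < -2 * K - 1) /\ (2 * K < y -> 2 * K < f y)).
  { intros y Hy. rewrite f_Theta by lia.
    destruct (Theta_cases y) as [[k [? ->]]|[k [? ->]]]; lia. }
  destruct (Z.lt_ge_cases x (-2 * K - 1)); [specialize (Hout x ltac:(lia)); lia|].
  destruct (Z.lt_ge_cases (2 * K) x); [specialize (Hout x ltac:(lia)); lia|].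
  left. split; [lia|].
  destruct (Z.lt_ge_cases (f x) (-2 * K - 1)), (Z.lt_ge_cases (2 * K) (f x)); try lia;
    destruct (Hout (f x) ltac:(lia)) as (_ & Hlo & Hhi); rewrite f_inv in Hlo, Hhi; lia.
Qed.

Lemma window_closed x : In x (window K) -> In (f x) (window K).
Proof.
  rewrite !in_window by assumption. destruct (fpf_involution_window_cases x); lia.
Qed.

Lemma lfpf_pair_in_window i j : lfpf_pair f (i, j) -> In i (window K) /\ In j (window K).
Proof.
  unfold lfpf_pair; simpl. intros (Hij & Hdesc & Hne). rewrite !in_window by assumption.
  destruct (fpf_involution_window_cases i) as [Hi|[(Hi & Ei & Hfi)|(Hi & Ei & Hfi)]];
  destruct (fpf_involution_window_cases j) as [Hj|[(Hj & Ej & Hfj)|(Hj & Ej & Hfj)]];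
  try lia; exfalso; rewrite Ei in Hdesc, Hne; rewrite Ej in Hdesc;
  exact (Hne (Theta_inversion i j Hij (Z.gt_lt _ _ Hdesc))).
Qed.

End Window.

Definition lfpf_pairb (f : Z -> Z) (i j : Z) : bool := (i <? j) && (f j <? f i) && negb (f i =? j).

Definition lfpf_ind (f : Z -> Z) (i j : Z) : Z := if lfpf_pairb f i j then 1 else 0.

Definition lfpf_count (f : Z -> Z) (l : list Z) : Z := zsum l (fun i => zsum l (lfpf_ind f i)).

Lemma lfpf_pairb_spec f i j : lfpf_pairb f i j = true <-> lfpf_pair f (i, j).
Proof.
  unfold lfpf_pairb, lfpf_pair; simpl.
  rewrite !andb_true_iff, negb_true_iff, !Z.ltb_lt, Z.eqb_neq. lia.
Qed.

Lemma lfpf_count_ge0 f l : 0 <= lfpf_count f l.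
Proof.
  apply zsum_ge0; intros. apply zsum_ge0; intros. unfold lfpf_ind. destruct lfpf_pairb; lia.
Qed.

Lemma NoDup_list_prod {A B : Type} (l1 : list A) (l2 : list B) :
  NoDup l1 -> NoDup l2 -> NoDup (list_prod l1 l2).
Proof.
  intros H1 H2. induction H1 as [|a l1 Ha _ IH]; simpl; [constructor|].
  apply NoDup_app; auto.
  - apply NoDup_map_NoDup_ForallPairs; auto. intros x y _ _ E. now inversion E.
  - intros [u v] Hm Hp. apply in_map_iff in Hm as [y [E _]]. inversion E; subst.
    apply in_prod_iff in Hp as [Hp _]. auto.
Qed.

Lemma length_filter_list_prod l1 l2 (g : Z * Z -> bool) :
  Z.of_nat (length (filter g (list_prod l1 l2))) =
  zsum l1 (fun i => zsum l2 (fun j => if g (i, j) then 1 else 0)).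
Proof.
  induction l1 as [|a l1 IH]; simpl; auto.
  rewrite filter_app, length_app, Nat2Z.inj_add, IH. f_equal. clear IH.
  induction l2 as [|b l2 IH2]; simpl; auto.
  destruct (g (a, b)); simpl length; lia.
Qed.

Lemma twice_lfpf_count f l : NoDup l ->
  (forall i j, lfpf_pair f (i, j) -> In i l /\ In j l) ->
  twice_lfpf f (Z.to_nat (lfpf_count f l)).
Proof.
  intros Hl Hsupp. exists (filter (fun p => lfpf_pairb f (fst p) (snd p)) (list_prod l l)).
  split; [|split].
  - apply NoDup_filter, NoDup_list_prod; assumption.
  - intros [i j]. rewrite filter_In, in_prod_iff, lfpf_pairb_spec. simpl.
    split; [tauto|]. intros H. split; auto.
  - apply Nat2Z.inj. rewrite length_filter_list_prod, Z2Nat.id by apply lfpf_count_ge0.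
    reflexivity.
Qed.

Lemma twice_lfpf_unique f k k' : twice_lfpf f k -> twice_lfpf f k' -> k = k'.
Proof.
  intros [l (Hl & Hin & <-)] [l' (Hl' & Hin' & <-)].
  apply Nat.le_antisymm; apply NoDup_incl_length; auto; intros p Hp.
  - apply Hin', Hin, Hp.
  - apply Hin, Hin', Hp.
Qed.

Lemma twice_lfpf_window f K : fpf_involution f K -> 0 <= K ->
  twice_lfpf f (Z.to_nat (lfpf_count f (window K))).
Proof.
  intros HfK HK. apply twice_lfpf_count; [apply window_NoDup|].
  apply lfpf_pair_in_window; assumption.
Qed.

Lemma fpf_involution_twice_lfpf f M : fpf_involution f M -> exists k, twice_lfpf f k.
Proof.
  intros HfM. exists (Z.to_nat (lfpf_count f (window (Z.abs M)))).
  apply twice_lfpf_window; [apply (fpf_involution_mono f M)|]; auto; lia.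
Qed.

Definition lfpf_sym (f : Z -> Z) (i j : Z) : Z := lfpf_ind f i j + lfpf_ind f j i.

Definition lfpf_sym_change (f : Z -> Z) (a b i j : Z) : Z :=
  lfpf_sym (conj_transp a b f) (transp a b i) (transp a b j) - lfpf_sym f i j.

Definition strictly_between (a x b : Z) : bool := (a <? x) && (x <? b).

(* The change of [lfpf_sym] over the pairs joining [x] to [{a, b, f a, f b}]. *)
Definition psi (f : Z -> Z) (a b x : Z) : Z :=
  (if strictly_between a x b
   then (if f a <? f x then 1 else -1) + (if f x <? f b then 1 else -1) else 0) +
  (if strictly_between a (f x) b
   then (if f a <? x then 1 else -1) + (if x <? f b then 1 else -1) else 0).

Ltac decide_comparisons :=
  repeat (match goal with
   | |- context [Z.ltb ?x ?y] => destruct (Z.ltb_spec x y)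
   | |- context [Z.eqb ?x ?y] => destruct (Z.eqb_spec x y)
   end; cbn [andb negb]; try (exfalso; lia)); try lia.

Lemma zsum_lfpf_sym f l : zsum l (fun i => zsum l (lfpf_sym f i)) = 2 * lfpf_count f l.
Proof.
  unfold lfpf_sym, lfpf_count.
  rewrite (zsum_ext l _ (fun i => zsum l (lfpf_ind f i) + zsum l (fun j => lfpf_ind f j i)))
    by (intros; apply zsum_add).
  rewrite zsum_add, (zsum_exchange l l (fun i j => lfpf_ind f j i)), <- Z.add_diag.
  reflexivity.
Qed.

Lemma lfpf_sym_change_sym f a b i j : lfpf_sym_change f a b i j = lfpf_sym_change f a b j i.
Proof. unfold lfpf_sym_change, lfpf_sym. lia. Qed.

(* Reindexing the pairs of [conj_transp a b f] along [transp a b]. *)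
Lemma lfpf_count_conj_transp_change f a b l : NoDup l -> In a l -> In b l -> a <> b ->
  2 * (lfpf_count (conj_transp a b f) l - lfpf_count f l) =
  zsum l (fun i => zsum l (lfpf_sym_change f a b i)).
Proof.
  intros Hl Ha Hb Hab. set (g := conj_transp a b f).
  rewrite Z.mul_sub_distr_l, <- !zsum_lfpf_sym.
  rewrite <- (zsum_transp l (fun i => zsum l (lfpf_sym g i)) a b) by assumption.
  rewrite (zsum_ext l (fun i => zsum l (lfpf_sym g (transp a b i)))
             (fun i => zsum l (fun j => lfpf_sym g (transp a b i) (transp a b j)))).
  - rewrite <- zsum_sub. apply zsum_ext. intros i _. rewrite <- zsum_sub. reflexivity.
  - intros i _. symmetry. apply (zsum_transp l (lfpf_sym g (transp a b i))); assumption.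
Qed.

Lemma sgn_sub_neq x y : x <> y -> Z.sgn (y - x) = if x <? y then 1 else -1.
Proof. intros. destruct (Z.ltb_spec x y); [apply Z.sgn_pos|apply Z.sgn_neg]; lia. Qed.

Section Transposition.

Variables (f : Z -> Z) (a b : Z).
Hypotheses (f_inv : forall i, f (f i) = i) (f_fpf : forall i, f i <> i)
  (a_lt_b : a < b) (fa_lt_a : f a < a).

Lemma fb_neq_a : f b <> a.
Proof. intros E. rewrite <- E, f_inv in fa_lt_a. lia. Qed.

Lemma fa_neq_fb : f a <> f b.
Proof. intros E. apply (f_equal f) in E. rewrite !f_inv in E. lia. Qed.

Lemma conj_transp_l : conj_transp a b f a = f b.
Proof.
  unfold conj_transp. rewrite transp_l. apply transp_other; [apply fb_neq_a|apply f_fpf].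
Qed.

Lemma conj_transp_r : conj_transp a b f b = f a.
Proof. unfold conj_transp. rewrite transp_r. apply transp_other; lia. Qed.

Lemma conj_transp_fa : conj_transp a b f (f a) = b.
Proof. unfold conj_transp. rewrite (transp_other a b (f a)), f_inv by lia. apply transp_l. Qed.

Lemma conj_transp_fb : conj_transp a b f (f b) = a.
Proof.
  unfold conj_transp. rewrite (transp_other a b (f b)), f_inv by (apply fb_neq_a || apply f_fpf).
  apply transp_r.
Qed.

Ltac expand_change :=
  pose proof fb_neq_a; pose proof fa_neq_fb; pose proof (f_fpf b);
  unfold lfpf_sym_change, lfpf_sym, lfpf_ind, lfpf_pairb, strictly_between;
  rewrite ?transp_l, ?transp_r, ?(transp_other a b (f a)), ?(transp_other a b (f b)) by lia;
  rewrite ?conj_transp_l, ?conj_transp_r, ?conj_transp_fa, ?conj_transp_fb, ?f_inv.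

Lemma lfpf_sym_change_quad :
  let S4 (F : Z -> Z) := F a + F b + F (f a) + F (f b) in
  S4 (fun i => S4 (lfpf_sym_change f a b i)) =
  4 * Z.sgn (f b - f a) + 4 * (if strictly_between a (f b) b then 1 else 0).
Proof.
  intros S4. unfold S4. rewrite sgn_sub_neq by apply fa_neq_fb. expand_change. decide_comparisons.
Qed.

Section OffQuad.

Variable j : Z.
Hypotheses (j_a : j <> a) (j_b : j <> b) (j_fa : j <> f a) (j_fb : j <> f b).

Lemma image_off_quad : f j <> a /\ f j <> b /\ f j <> f a /\ f j <> f b.
Proof.
  repeat split; intros E; apply (f_equal f) in E; rewrite ?f_inv in E; auto.
Qed.

Lemma conj_transp_off_quad : conj_transp a b f j = f j.
Proof. apply conj_transp_other; auto. Qed.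

Ltac expand_row :=
  destruct image_off_quad as (? & ? & ? & ?); pose proof (f_fpf j);
  expand_change; rewrite (transp_other a b j), conj_transp_off_quad by assumption;
  decide_comparisons.

Lemma lfpf_sym_change_l : lfpf_sym_change f a b a j =
  if strictly_between a j b then (if f a <? f j then 1 else -1) else 0.
Proof. expand_row. Qed.

Lemma lfpf_sym_change_r : lfpf_sym_change f a b b j =
  if strictly_between a j b then (if f j <? f b then 1 else -1) else 0.
Proof. expand_row. Qed.

Lemma lfpf_sym_change_fa : lfpf_sym_change f a b (f a) j =
  if strictly_between a (f j) b then (if f a <? j then 1 else -1) else 0.
Proof. expand_row. Qed.

Lemma lfpf_sym_change_fb : lfpf_sym_change f a b (f b) j =
  if strictly_between a (f j) b then (if j <? f b then 1 else -1) else 0.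
Proof. expand_row. Qed.

Lemma lfpf_sym_change_row : lfpf_sym_change f a b a j + lfpf_sym_change f a b b j +
  lfpf_sym_change f a b (f a) j + lfpf_sym_change f a b (f b) j = psi f a b j.
Proof.
  rewrite lfpf_sym_change_l, lfpf_sym_change_r, lfpf_sym_change_fa, lfpf_sym_change_fb.
  unfold psi. destruct (strictly_between a j b), (strictly_between a (f j) b); lia.
Qed.

End OffQuad.

Lemma lfpf_sym_change_off_quad i j :
  i <> a -> i <> b -> i <> f a -> i <> f b -> j <> a -> j <> b -> j <> f a -> j <> f b ->
  lfpf_sym_change f a b i j = 0.
Proof.
  intros. unfold lfpf_sym_change, lfpf_sym, lfpf_ind, lfpf_pairb.
  rewrite (transp_other a b i), (transp_other a b j), !conj_transp_other by auto. lia.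
Qed.

End Transposition.

Lemma lfpf_count_conj_transp f a b l :
  (forall i, f (f i) = i) -> (forall i, f i <> i) -> a < b -> f a < a ->
  NoDup l -> In a l -> In b l -> (forall x, In x l -> In (f x) l) ->
  lfpf_count (conj_transp a b f) l =
  lfpf_count f l + 2 * Z.sgn (f b - f a) + 2 * (if strictly_between a (f b) b then 1 else 0)
  + zsum (remove4 a b (f a) (f b) l) (psi f a b).
Proof.
  intros f_inv f_fpf Hab Hfa Hl Ha Hb Hcl.
  assert (Hfb_a : f b <> a) by (apply (fb_neq_a f a b); assumption).
  assert (Hfa_fb : f a <> f b) by (apply (fa_neq_fb f a b); assumption).
  pose proof (f_fpf b).
  set (l' := remove4 a b (f a) (f b) l).
  assert (Hsplit : forall F, zsum l F = F a + F b + F (f a) + F (f b) + zsum l' F)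
    by (intros; apply zsum_remove4; auto; lia).
  assert (Hrow : forall j, In j l' -> lfpf_sym_change f a b a j + lfpf_sym_change f a b b j +
             lfpf_sym_change f a b (f a) j + lfpf_sym_change f a b (f b) j = psi f a b j).
  { intros j Hj. apply in_remove4 in Hj. apply lfpf_sym_change_row; tauto. }
  assert (Hfrom_off : forall i, In i l' ->
             zsum l (lfpf_sym_change f a b i) = psi f a b i).
  { intros i Hi. rewrite Hsplit, <- Hrow, !(lfpf_sym_change_sym f a b i) by assumption.
    rewrite zsum_eq0; [lia|]. intros j Hj.
    apply in_remove4 in Hi, Hj. apply lfpf_sym_change_off_quad; tauto. }
  assert (Hfrom_quad : zsum l' (lfpf_sym_change f a b a) + zsum l' (lfpf_sym_change f a b b) +
             zsum l' (lfpf_sym_change f a b (f a)) + zsum l' (lfpf_sym_change f a b (f b)) =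
             zsum l' (psi f a b)).
  { rewrite <- (zsum_ext l' _ _ Hrow), !zsum_add. reflexivity. }
  pose proof (lfpf_count_conj_transp_change f a b l Hl Ha Hb ltac:(lia)) as Hchange.
  pose proof (lfpf_sym_change_quad f a b f_inv f_fpf Hab Hfa) as Hquad. cbv beta zeta in Hquad.
  rewrite Hsplit, (zsum_ext l' _ _ Hfrom_off), !Hsplit in Hchange.
  lia.
Qed.

Lemma twice_lfpf_conj_transp f M a b k k' :
  fpf_involution f M -> a < b -> f a < a ->
  twice_lfpf f k -> twice_lfpf (conj_transp a b f) k' ->
  exists L : list Z,
    (forall x, In x L -> x <> a /\ x <> b /\ x <> f a /\ x <> f b) /\
    (forall x, a < x < b -> x <> f a -> x <> f b -> In x L) /\
    Z.of_nat k' = Z.of_nat k + 2 * Z.sgn (f b - f a)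
      + 2 * (if strictly_between a (f b) b then 1 else 0) + zsum L (psi f a b).
Proof.
  intros HfM Hab Hfa Hk Hk'.
  set (K := Z.abs M + Z.abs a + Z.abs b + 1).
  assert (HfK : fpf_involution f K) by (apply (fpf_involution_mono f M); auto; lia).
  assert (HgK : fpf_involution (conj_transp a b f) K)
    by (apply fpf_involution_conj_transp; auto; lia).
  assert (Hwin : forall x, a <= x <= b -> In x (window K)) by (intros; apply in_window; lia).
  rewrite (twice_lfpf_unique _ _ _ Hk (twice_lfpf_window f K HfK ltac:(lia))),
    (twice_lfpf_unique _ _ _ Hk' (twice_lfpf_window _ K HgK ltac:(lia))),
    !Z2Nat.id by apply lfpf_count_ge0.
  exists (remove4 a b (f a) (f b) (window K)). split; [|split].
  - intros x Hx. apply in_remove4 in Hx. tauto.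
  - intros x Hx Hxa Hxb. apply in_remove4. repeat split; auto; try lia. apply Hwin; lia.
  - pose proof HfK as (f_inv & f_fpf & _).
    apply lfpf_count_conj_transp; auto using window_NoDup, window_closed with zarith.
Qed.

Lemma psi_ge0 f a b x : f a < f b -> 0 <= psi f a b x.
Proof. intros. unfold psi, strictly_between. decide_comparisons. Qed.

Lemma psi_le0 f a b x : f b < f a -> psi f a b x <= 0.
Proof. intros. unfold psi, strictly_between. decide_comparisons. Qed.

Lemma psi_ge2 f a b x : a < x < b -> f a < f x < f b -> 2 <= psi f a b x.
Proof. intros. unfold psi, strictly_between. decide_comparisons. Qed.

Lemma psi_eq0 f a b x : f a < f b -> (a < x < b -> f x < f a) -> (a < f x < b -> x < f a) ->
  psi f a b x = 0.
Proof. intros. unfold psi, strictly_between. decide_comparisons. Qed.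

Section LexMaxVisible.

Variables (z : Z -> Z) (q r : Z).
Hypotheses (z_inv : forall i, z (z i) = i) (z_fpf : forall i, z i <> i)
  (qr_max : lex_max_visible z q r).

Lemma lex_max_not_visible i j : fpf_visible z i j -> q < i \/ (i = q /\ r < j) -> False.
Proof.
  destruct qr_max as [_ Hmax]. intros Hvis. specialize (Hmax i j Hvis).
  unfold lex_le in Hmax; simpl in Hmax. lia.
Qed.

Lemma lex_max_order : z r < q < r /\ z r < z q.
Proof. destruct qr_max as [Hvis _]. unfold fpf_visible in Hvis. lia. Qed.

Lemma lex_max_zq_not_between : ~ (q < z q < r).
Proof.
  intros H. pose proof lex_max_order. apply (lex_max_not_visible (z q) r); [|lia].
  unfold fpf_visible. rewrite z_inv. lia.
Qed.

Lemma lex_max_between e : q < e < r -> z e < z r.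
Proof.
  intros He. pose proof lex_max_order.
  destruct (Z.lt_ge_cases (z e) (z r)) as [|Hge]; [assumption|]. exfalso.
  assert (z e <> z r) by (intros E; apply (f_equal z) in E; rewrite !z_inv in E; lia).
  apply (lex_max_not_visible e r); [unfold fpf_visible|]; lia.
Qed.

Let y := conj_transp q r z.

Lemma y_q : y q = z r.
Proof.
  pose proof lex_max_order. unfold y, conj_transp. rewrite transp_l.
  apply transp_other; [lia|apply z_fpf].
Qed.

Lemma y_r : y r = z q.
Proof.
  pose proof lex_max_order. unfold y, conj_transp. rewrite transp_r.
  apply transp_other; [apply z_fpf|]. intros E. rewrite <- E, z_inv in *. lia.
Qed.

Lemma y_zq : q < z q -> y (z q) = r.
Proof.
  intros. pose proof lex_max_order.
  assert (z q <> r) by (intros E; rewrite <- E, z_inv in *; lia).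
  unfold y, conj_transp. rewrite (transp_other q r (z q)), z_inv by lia. apply transp_l.
Qed.

Lemma y_other x : x <> q -> x <> r -> x <> z q -> x <> z r -> y x = z x.
Proof. intros. apply conj_transp_other; assumption. Qed.

Lemma lex_max_increment_eq2 (L : list Z) :
  (forall x, In x L -> x <> q /\ x <> r /\ x <> y q /\ x <> y r) ->
  2 * Z.sgn (y r - y q) + 2 * (if strictly_between q (y r) r then 1 else 0)
  + zsum L (psi y q r) = 2.
Proof.
  intros HL. pose proof lex_max_order. pose proof lex_max_zq_not_between.
  rewrite y_q, y_r in *. rewrite Z.sgn_pos by lia.
  rewrite zsum_eq0.
  - unfold strictly_between. destruct (Z.ltb_spec q (z q)), (Z.ltb_spec (z q) r); cbn [andb]; lia.
  - intros x Hx. specialize (HL x Hx).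
    apply psi_eq0; rewrite ?y_q, ?y_r, ?y_other by tauto;
      [lia|intros; apply lex_max_between; lia|].
    intros Hzx. rewrite <- (z_inv x). apply lex_max_between. assumption.
Qed.

(* Cases on the position of [y j]; each case either increases the count by
   at least 4, decreases it, or produces a visible inversion beyond (q, r). *)
Lemma lex_max_increment_neq2 j (L : list Z) : q < j -> j <> r ->
  (forall x, q < x < j -> x <> y q -> x <> y j -> In x L) ->
  2 * Z.sgn (y j - y q) + 2 * (if strictly_between q (y j) j then 1 else 0)
  + zsum L (psi y q j) <> 2.
Proof.
  intros Hqj Hjr HL. pose proof lex_max_order. rewrite y_q.
  unfold strictly_between.
  destruct (Z.eq_dec j (z q)) as [->|Hjs].
  - pose proof lex_max_zq_not_between. rewrite y_zq, Z.sgn_pos by lia.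
    assert (0 <= zsum L (psi y q (z q)))
      by (apply zsum_ge0; intros; apply psi_ge0; rewrite y_q, y_zq; lia).
    destruct (Z.ltb_spec q r), (Z.ltb_spec r (z q)); cbn [andb]; lia.
  - assert (Hyj : y j = z j) by (apply y_other; lia).
    rewrite Hyj.
    assert (z j <> z r) by (intros E; apply (f_equal z) in E; rewrite !z_inv in E; lia).
    destruct (Z.lt_ge_cases (z j) (z r)) as [Hlt|Hge].
    + rewrite Z.sgn_neg by lia.
      assert (zsum L (psi y q j) <= 0)
        by (apply zsum_le0; intros; apply psi_le0; rewrite y_q, Hyj; lia).
      destruct (Z.ltb_spec q (z j)); cbn [andb]; lia.
    + rewrite Z.sgn_pos by lia.
      assert (0 <= zsum L (psi y q j))
        by (apply zsum_ge0; intros; apply psi_ge0; rewrite y_q, Hyj; lia).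
      destruct (Z.lt_ge_cases j r).
      { exfalso. apply (lex_max_not_visible j r); [unfold fpf_visible|]; lia. }
      assert (z j <> z q) by (intros E; apply (f_equal z) in E; rewrite !z_inv in E; lia).
      destruct (Z.lt_ge_cases (z j) (z q)).
      * assert (z j <> q) by (intros E; rewrite <- E, z_inv in Hjs; lia).
        destruct (Z.lt_ge_cases (z j) q).
        { exfalso. apply (lex_max_not_visible q j); [unfold fpf_visible|]; lia. }
        destruct (Z.lt_ge_cases (z j) j).
        -- destruct (Z.ltb_spec q (z j)), (Z.ltb_spec (z j) j); cbn [andb]; lia.
        -- exfalso. apply (lex_max_not_visible j (z q)); [unfold fpf_visible; rewrite z_inv|];
             pose proof (z_fpf j); lia.
      * (* r sits strictly between q and j with z r < z q < z j *)
        assert (2 <= zsum L (psi y q j)).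
        { apply (Z.le_trans _ (psi y q j r)).
          - apply psi_ge2; rewrite ?y_q, ?y_r, ?Hyj; lia.
          - apply zsum_ge_term; [intros; apply psi_ge0; rewrite y_q, Hyj; lia|].
            apply HL; rewrite ?y_q, ?Hyj; try lia.
            intros E. apply (f_equal z) in E. rewrite z_inv in E. lia. }
        destruct (Z.ltb_spec q (z j)), (Z.ltb_spec (z j) j); cbn [andb]; lia.
Qed.

End LexMaxVisible.

Theorem lemma3p17 (z : Z -> Z) (q r : Z) :
  in_FZ z -> z <> Theta -> lex_max_visible z q r ->
  forall v : Z -> Z, in_PsiHatPlus (conj_transp q r z) q v <-> v = z.
Proof.
  (* [z <> Theta] is implied by the existence of the visible inversion (q, r). *)
  intros Hz _ Hmax v.
  destruct (in_FZ_fpf_involution z Hz) as [M HzM].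
  pose proof HzM as (z_inv & z_fpf & _).
  pose proof (lex_max_order z q r Hmax) as Hord.
  assert (HyM : fpf_involution (conj_transp q r z) (Z.abs M + Z.abs q + Z.abs r + 1))
    by (apply fpf_involution_conj_transp; [apply (fpf_involution_mono z M)|..]; auto; lia).
  assert (Hyq : conj_transp q r z q < q) by (rewrite (y_q z q r); auto; lia).
  split.
  - intros (_ & (k & Hk & Hk') & j & Hqj & ->).
    destruct (Z.eq_dec j r) as [->|Hjr]; [apply conj_transp_involutive|].
    destruct (twice_lfpf_conj_transp _ _ q j _ _ HyM Hqj Hyq Hk Hk') as (L & _ & HL & Hcount).
    exfalso. apply (lex_max_increment_neq2 z q r z_inv z_fpf Hmax j L Hqj Hjr HL). lia.
  - intros ->. split; [exact Hz|]. split.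
    2: { exists r. split; [lia|]. symmetry. apply conj_transp_involutive. }
    destruct (fpf_involution_twice_lfpf _ _ HyM) as [k Hk].
    destruct (fpf_involution_twice_lfpf _ _ HzM) as [k' Hk'].
    pose proof Hk' as Hk''. rewrite <- (conj_transp_involutive q r z) in Hk''.
    destruct (twice_lfpf_conj_transp _ _ q r _ _ HyM ltac:(lia) Hyq Hk Hk'')
      as (L & HL & _ & Hcount).
    pose proof (lex_max_increment_eq2 z q r z_inv z_fpf Hmax L HL).
    exists k. split; [exact Hk|]. replace (k + 2)%nat with k' by lia. exact Hk'.
Qed.
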